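(* Let $u,v\in\mathbb{N}$. Let $M$ be a finite $u\times v$ matrix which is image partition regular over $\mathbb{N}$, and let $N$ be an infinite ($\omega\times\omega$) matrix which is image partition regular near $0$ over a dense subsemigroup $S$ of $((0,\infty),+)$. Then the block matrix \[\begin{pmatrix} M & O\\ O & N\end{pmatrix}\] (where the $O$ denote zero matrices of the appropriate sizes) is image partition regular near $0$ over $S$.
   Context: Matrices have rational entries, and each row of an infinite matrix has only finitely many nonzero entries (so that $A\vec{x}$ is defined). A $u\times v$ matrix $A$ with $u,v\in\mathbb{N}$ is image partition regular over $\mathbb{N}$ if whenever $\mathbb{N}$ is partitioned into finitely many cells $\mathbb{N}=\bigcup_{i=1}^r C_i$, there exist $i$ and $\vec{x}\in\mathbb{N}^v$ such that all entries of $A\vec{x}$ lie in $C_i$. For $S$ a dense subsemigroup of $((0,\infty),+)$ and $A$ a $u\times v$ matrix with $u,v\in\mathbb{N}\cup\{\omega\}$, $A$ is image partition regular near $0$ over $S$ if whenever $S=\bigcup_{i=1}^r C_i$ is a finite partition and $\delta>0$, there exist $i\in\{1,\dots,r\}$ and $\vec{x}\in S^v$ such that all entries of $A\vec{x}$ lie in $C_i\cap(0,\delta)$. *)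

From HB Require Import structures.
From mathcomp Require Import all_boot all_order all_algebra.
From mathcomp Require Import all_classical all_reals all_analysis.
Set Implicit Arguments. Unset Strict Implicit. Unset Printing Implicit Defensive.
Import Order.TTheory GRing.Theory Num.Theory.
Local Open Scope classical_set_scope.
Local Open Scope ring_scope.

(* Finite matrices: 'M[rat]_(u, v).  Infinite (omega x omega) matrices:
   functions nat -> nat -> rat, row i column j. *)
Definition infmx := nat -> nat -> rat.

Definition row_finite (A : infmx) : Prop :=
  forall i, exists n : nat, forall j : nat, (n <= j)%N -> A i j = 0.

(* "the i-th entry of A x lies in P": the entry is the (finite) sum
   \sum_j A i j * x j, computed over any initial segment containing the
   support of row i. *)
Definition entry_in {R : realType} (A : infmx) (x : nat -> R) (i : nat)
    (P : set R) : Prop :=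
  forall n : nat, (forall j : nat, (n <= j)%N -> A i j = 0) ->
    P (\sum_(j < n) ratr (A i j) * x j).

Definition dense_subsemigroup {R : realType} (S : set R) : Prop :=
  S `<=` [set x | 0 < x] /\
  (forall s t, S s -> S t -> S (s + t)) /\
  [set x | 0 < x] `<=` closure (S : set R^o).

Definition IPR_N (u v : nat) (M : 'M[rat]_(u, v)) : Prop :=
  forall (r : nat) (C : nat -> set nat),
    (forall i, C i `<=` [set n | (0 < n)%N]) ->
    (forall i k, (i < r)%N -> (k < r)%N -> i <> k -> C i `&` C k = set0) ->
    (forall n, (0 < n)%N -> exists2 i, (i < r)%N & C i n) ->
    exists2 i, (i < r)%N &
      exists x : 'I_v -> nat, (forall j, (0 < x j)%N) /\
        forall k : 'I_u, exists2 n : nat, C i n &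
          \sum_(j < v) M k j * (x j)%:R = n%:R.

Definition IPR_near0 {R : realType} (S : set R) (A : infmx) : Prop :=
  forall (r : nat) (C : nat -> set R) (delta : R),
    (forall i, C i `<=` S) ->
    (forall i k, (i < r)%N -> (k < r)%N -> i <> k -> C i `&` C k = set0) ->
    (forall s, S s -> exists2 i, (i < r)%N & C i s) ->
    0 < delta ->
    exists2 i, (i < r)%N &
      exists x : nat -> R, (forall j, S (x j)) /\
        forall k : nat, entry_in A x k (C i `&` [set y | 0 < y < delta]).

(* The block matrix  ( M O ; O N )  viewed as an omega x omega matrix:
   rows 0..u-1 / columns 0..v-1 are those of M, row u+i / column v+j is
   row i / column j of N. *)
Definition block_mx_inf (u v : nat) (M : 'M[rat]_(u, v)) (N : infmx) : infmx :=
  fun i j =>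
    if (i < u)%N then
      (if (j < v)%N then (match insub i, insub j with
                          | Some i', Some j' => M i' j'
                          | _, _ => 0 end) else 0)
    else (if (j < v)%N then 0 else N (i - u)%N (j - v)%N).

From mathcomp Require Import all_boot all_order all_algebra.
From mathcomp Require Import all_classical all_reals all_analysis.
Set Implicit Arguments. Unset Strict Implicit. Unset Printing Implicit Defensive.
Import Order.TTheory GRing.Theory Num.Theory.
Local Open Scope classical_set_scope.
Local Open Scope ring_scope.

(* A compactness (Koenig) argument bounds the partition regularity of M: for
   finitely many colours there is K such that every colouring of [1, K] admits
   a positive x for which all entries of M x lie in [1, K] and share a colour.
   Given a colouring c of S, colour t in S by its pattern (c(t), ..., c(K t)).
   There are finitely many patterns, so N has an image y with all entries in
   one pattern class and below delta / K. For one such entry t0, colour n by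
   c(n t0) and take x for M as above, with colour c(m t0) for some m <= K.
   Then (x t0, m y) works: every entry of M x t0 is some n t0 with
   c(n t0) = c(m t0), and every entry of N (m y) is m t with t in the pattern
   class of t0, so c(m t) = c(m t0). *)

Lemma dependent_choice_fun (A : Type) (P : nat -> (nat -> A) -> Prop) (g0 : nat -> A) :
  P 0%N g0 -> (forall n g, P n g -> exists a, P n.+1 [eta g with n.+1 |-> a]) ->
  exists h : nat -> A, forall n, exists2 g, P n g & forall m, (m <= n)%N -> g m = h m.
Proof.
move=> P0 Pstep.
have [F FP] : {F : nat * (nat -> A) -> A & forall n g, P n g ->
    P n.+1 [eta g with n.+1 |-> F (n, g)]}.
  have /boolp.choice[F FP] : forall ng : nat * (nat -> A), exists a,
      P ng.1 ng.2 -> P ng.1.+1 [eta ng.2 with ng.1.+1 |-> a].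
    move=> [n g] /=; have [/Pstep[a Pa]|nPg] := boolp.pselect (P n g).
      by exists a.
    by exists (g 0%N).
  by exists F => n g /(FP (n, g)).
pose fix gs n := if n is n'.+1 then [eta gs n' with n |-> F (n', gs n')] else g0.
have gs_stable n m : (m <= n)%N -> gs n m = gs m m.
  elim: n => [|n IH]; first by rewrite leqn0 => /eqP ->.
  by rewrite leq_eqVlt => /orP[/eqP ->//|mn]; rewrite /= (ltn_eqF mn) IH.
exists (fun m => gs m m) => n; exists (gs n); last exact: gs_stable.
by elim: n => //= n; apply: FP.
Qed.

Lemma big_ord_support (V : nmodType) (g : nat -> V) a b :
  (forall j, (a <= j)%N -> g j = 0) -> (a <= b)%N ->
  \sum_(j < b) g j = \sum_(j < a) g j.
Proof.
move=> ga ab; rewrite (big_ord_widen _ g ab) [RHS]big_mkcond /=.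
by apply: eq_bigr => j _; case: ltnP => // /ga.
Qed.

Lemma coloring_of_cover (T : Type) (D : set T) (C : nat -> set T) r :
  (forall t, D t -> exists2 i, (i < r.+1)%N & C i t) ->
  exists col : T -> 'I_r.+1, forall t, D t -> C (col t) t.
Proof.
move=> Dcov; have /boolp.choice[col colP] t : exists i : 'I_r.+1, D t -> C i t.
  have [/Dcov[i ir Cit]|nDt] := boolp.pselect (D t); first by exists (Ordinal ir).
  by exists ord0.
by exists col.
Qed.

Lemma natmul_lt_div (R : realFieldType) (t delta : R) n K :
  (0 < n <= K)%N -> 0 < t < delta / K%:R -> 0 < n%:R * t < delta.
Proof.
move=> /andP[n0 nK] /andP[t0 tK]; rewrite mulr_gt0 ?ltr0n //=.
have K0 : 0 < K%:R :> R by rewrite ltr0n (leq_trans n0).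
rewrite (le_lt_trans (y := K%:R * t)) ?ler_wpM2r ?ler_nat ?ltW //.
by rewrite mulrC -ltr_pdivlMr.
Qed.

Lemma ratr_sum_natmul (R : numFieldType) n (a : 'I_n -> rat) (x : 'I_n -> nat) m (t : R) :
  \sum_(j < n) a j * (x j)%:R = m%:R ->
  \sum_(j < n) ratr (a j) * ((x j)%:R * t) = m%:R * t.
Proof.
move=> ax; under eq_bigr do rewrite mulrA -ratr_nat -rmorphM.
by rewrite -big_distrl -rmorph_sum /= ax ratr_nat.
Qed.

Section BoundedMonochromaticImage.

Variables (u v : nat) (M : 'M[rat]_(u, v)) (T : finType).

Definition mono_image (K : nat) (f : nat -> T) (i : T) : Prop :=
  exists2 x : 'I_v -> nat, (forall j, 0 < x j)%N &
    forall k : 'I_u, exists2 n : nat, (0 < n <= K)%N &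
      f n = i /\ \sum_(j < v) M k j * (x j)%:R = n%:R.

Lemma mono_image_widen K K' f i :
  (K <= K')%N -> mono_image K f i -> mono_image K' f i.
Proof.
move=> KK' [x xP Mx]; exists x => // k; have [n /andP[n0 nK] ?] := Mx k.
by exists n; rewrite ?n0 ?(leq_trans nK).
Qed.

Lemma eq_mono_image K f g i :
  (forall n, (0 < n <= K)%N -> f n = g n) -> mono_image K f i -> mono_image K g i.
Proof.
move=> fg [x xP Mx]; exists x => // k; have [n nK [fn e]] := Mx k.
by exists n; rewrite // -fg.
Qed.

Lemma IPR_N_fin_coloring (h : nat -> T) : IPR_N M -> exists i : T,
  exists2 x : 'I_v -> nat, (forall j, 0 < x j)%N &
    forall k : 'I_u, exists2 n : nat, (0 < n)%N &
      h n = i /\ \sum_(j < v) M k j * (x j)%:R = n%:R.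
Proof.
move=> ipr; pose C p := [set n : nat | (0 < n)%N /\ enum_rank (h n) = p :> nat].
have C_pos p : C p `<=` [set n | (0 < n)%N] by move=> n [].
have C_disj p q : (p < #|T|)%N -> (q < #|T|)%N -> p <> q -> C p `&` C q = set0.
  by move=> _ _ pq; apply/seteqP; split=> n // [[_ hp] [_ hq]]; apply: pq; rewrite -hp -hq.
have C_cover n : (0 < n)%N -> exists2 p, (p < #|T|)%N & C p n.
  by exists (enum_rank (h n)).
have [p pT [x [xP Mx]]] := ipr #|T| C C_pos C_disj C_cover.
exists (enum_val (Ordinal pT)); exists x => // k; have [n [n0 hn] e] := Mx k.
exists n => //; split=> //.
by apply: enum_rank_inj; rewrite enum_valK; apply: val_inj.
Qed.

Definition no_mono_image K f := forall i, ~ mono_image K f i.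

Definition extendable n (g : nat -> T) := forall K,
  exists2 f, no_mono_image K f & forall m, (0 < m <= n)%N -> f m = g m.

Lemma extendable_step n g :
  extendable n g -> exists a, extendable n.+1 [eta g with n.+1 |-> a].
Proof.
move=> ext; apply: contrapT => /forallNP noext.
have /boolp.choice[Ka Kabad] a : exists K, forall f, no_mono_image K f ->
    ~ forall m, (0 < m <= n.+1)%N -> f m = [eta g with n.+1 |-> a] m.
  have /existsNP[K /forallPNP bad] := noext a.
  by exists K => f fK fg; apply: (bad f).
pose K := (n.+1 + \max_a Ka a)%N.
have [f fK fg] := ext K; apply: (Kabad (f n.+1)).
  move=> i fi; apply: (fK i); apply: mono_image_widen fi.
  by rewrite (leq_trans (leq_bigmax (f n.+1)))// leq_addl.
move=> m /andP[m0]; rewrite leq_eqVlt /= => /orP[/eqP->|mn]; first by rewrite eqxx.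
by rewrite ltn_eqF// fg// m0.
Qed.

Lemma IPR_N_bounded : IPR_N M ->
  exists K, forall f : nat -> T, exists i, mono_image K f i.
Proof.
move=> ipr; apply: contrapT => /forallNP noK.
have bad K : exists f, no_mono_image K f.
  have /existsNP[f /forallNP fK] := noK K.
  by exists f.
have [g0 _] := bad 0%N.
have [|h hP] := @dependent_choice_fun _ extendable g0 _ extendable_step.
  by move=> K; have [f fK] := bad K; exists f => // m /andP[/leq_trans/[apply]].
have h_bad K : no_mono_image K h.
  have [g /(_ K)[f fK fg] gh] := hP K.
  move=> i hi; apply: (fK i); apply: eq_mono_image hi => n /andP[n0 nK].
  by rewrite -gh ?fg ?n0.
have [i [x xP Mx]] := IPR_N_fin_coloring h ipr.
have /boolp.choice[nk nkP] k : exists n, (0 < n)%N /\ h n = i /\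
    \sum_(j < v) M k j * (x j)%:R = n%:R.
  by have [n n0 ?] := Mx k; exists n.
apply: (h_bad (\max_k nk k) i); exists x => // k.
have [nk0 ?] := nkP k; exists (nk k) => //.
by rewrite nk0 (leq_bigmax k).
Qed.

Lemma mono_image_attained K f i : (0 < K)%N -> mono_image K f i ->
  exists i', exists2 m, (0 < m <= K)%N & f m = i' /\ mono_image K f i'.
Proof.
move=> K0 [x xP Mx]; have [u0|u_gt0] := posnP u.
  exists (f 1%N); exists 1%N; rewrite ?K0 //; split=> //.
  by exists (fun=> 1%N) => // k; have := ltn_ord k; rewrite {2}u0.
have [m mK [fm _]] := Mx (Ordinal u_gt0).
by exists i; exists m; rewrite // fm; split=> //; exists x.
Qed.

End BoundedMonochromaticImage.

Section NearZero.

Variables (R : realType) (S : set R).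

Lemma dense_subsemigroup_natmul t n :
  dense_subsemigroup S -> S t -> (0 < n)%N -> S (n%:R * t).
Proof.
move=> [_ [Sadd _]] St; elim: n => // [[|n]] IH _; first by rewrite mul1r.
by rewrite mulrSr mulrDl mul1r; apply: Sadd => //; apply: IH.
Qed.

Lemma IPR_near0_fin_coloring (A : infmx) (T : finType) (c : R -> T) delta :
  IPR_near0 S A -> 0 < delta -> exists i : T,
  exists2 x : nat -> R, (forall j, S (x j)) &
    forall k, entry_in A x k ([set y | S y /\ c y = i] `&` [set y | 0 < y < delta]).
Proof.
move=> ipr delta0; pose C p := [set y | S y /\ enum_rank (c y) = p :> nat].
have C_sub p : C p `<=` S by move=> y [].
have C_disj p q : (p < #|T|)%N -> (q < #|T|)%N -> p <> q -> C p `&` C q = set0.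
  by move=> _ _ pq; apply/seteqP; split=> y // [[_ hp] [_ hq]]; apply: pq; rewrite -hp -hq.
have C_cover y : S y -> exists2 p, (p < #|T|)%N & C p y.
  by exists (enum_rank (c y)).
have [p pT [x [Sx Ax]]] := ipr #|T| C delta C_sub C_disj C_cover delta0.
exists (enum_val (Ordinal pT)); exists x => // k n An.
have [[Sy cy] ydelta] := Ax k n An; split=> //; split=> //.
by apply: enum_rank_inj; rewrite enum_valK; apply: val_inj.
Qed.

End NearZero.

Section EntryIn.

Variables (R : realType).
Implicit Types (A : infmx) (x : nat -> R) (P : set R).

Lemma entry_in_support A x k P n0 :
  (forall j, (n0 <= j)%N -> A k j = 0) ->
  P (\sum_(j < n0) ratr (A k j) * x j) -> entry_in A x k P.
Proof.
move=> An0 Pn0 n An; pose g j := ratr (A k j) * x j.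
have g_tail m : (forall j, (m <= j)%N -> A k j = 0) -> forall j, (m <= j)%N -> g j = 0.
  by move=> Am j /Am; rewrite /g => ->; rewrite rmorph0 mul0r.
have [n0n|nn0] := leqP n0 n; first by rewrite (big_ord_support (g_tail _ An0)).
by rewrite -(big_ord_support (g_tail _ An) (ltnW nn0)).
Qed.

Lemma entry_in_scale A x k P c :
  entry_in A x k [set y | P (c * y)] -> entry_in A (fun j => c * x j) k P.
Proof.
move=> AxP n An; have /= := AxP n An; rewrite mulr_sumr.
by under eq_bigr do rewrite mulrCA.
Qed.

Variables (u v : nat) (M : 'M[rat]_(u, v)) (N : infmx).

Definition block_vec (a : 'I_v -> R) (b : nat -> R) : nat -> R :=
  fun j => if insub j is Some j' then a j' else b (j - v)%N.

Lemma block_vec_lt a b (j : 'I_v) : block_vec a b j = a j.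
Proof. by rewrite /block_vec valK. Qed.

Lemma block_vec_addl a b j : block_vec a b (v + j)%N = b j.
Proof. by rewrite /block_vec insubF ?addKn // ltnNge leq_addr. Qed.

Lemma block_mx_inf_lt (i : 'I_u) (j : 'I_v) : block_mx_inf M N i j = M i j.
Proof. by rewrite /block_mx_inf !ltn_ord !valK. Qed.

Lemma block_mx_inf_lt_ge (i : 'I_u) j : (v <= j)%N -> block_mx_inf M N i j = 0.
Proof. by rewrite /block_mx_inf ltn_ord ltnNge => ->. Qed.

Lemma block_mx_inf_addl i j :
  block_mx_inf M N (u + i)%N j = if (j < v)%N then 0 else N i (j - v)%N.
Proof. by rewrite /block_mx_inf ltnNge leq_addr addKn. Qed.

Lemma entry_in_block_top a b (k : 'I_u) P :
  P (\sum_(j < v) ratr (M k j) * a j) ->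
  entry_in (block_mx_inf M N) (block_vec a b) k P.
Proof.
move=> PMa; apply: (entry_in_support (n0 := v)); first exact: block_mx_inf_lt_ge.
by under eq_bigr do rewrite block_mx_inf_lt block_vec_lt.
Qed.

Lemma entry_in_block_bottom a b k P :
  entry_in N b k P -> entry_in (block_mx_inf M N) (block_vec a b) (u + k)%N P.
Proof.
move=> NbP n Bn; pose g j := ratr (block_mx_inf M N (u + k) j) * block_vec a b j.
have Nn j : (n - v <= j)%N -> N k j = 0.
  by rewrite leq_subLR => /Bn; rewrite block_mx_inf_addl ltnNge leq_addr addKn.
have nv : (n <= v + (n - v))%N by rewrite -leq_subLR.
rewrite -(big_ord_support (g := g) _ nv); last first.
  by move=> j /Bn; rewrite /g => ->; rewrite rmorph0 mul0r.
rewrite {}/g big_split_ord /= big1 ?add0r => [|j _]; last first.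
  by rewrite block_mx_inf_addl ltn_ord rmorph0 mul0r.
under eq_bigr do rewrite block_mx_inf_addl ltnNge leq_addr addKn block_vec_addl.
exact: NbP.
Qed.

End EntryIn.

Theorem theorem3p1 (R : realType) (S : set R) (u v : nat)
    (M : 'M[rat]_(u, v)) (N : infmx) :
  dense_subsemigroup S ->
  IPR_N M ->
  row_finite N ->
  IPR_near0 S N ->
  IPR_near0 S (block_mx_inf M N).
Proof.
move=> dS ipr rfN iprN r C delta Csub Cdis Ccov delta0.
case: r Cdis Ccov => [|r _] Ccov; first by case/(iprN 0%N C delta Csub).
have S_natmul := dense_subsemigroup_natmul dS.
have [col colP] := coloring_of_cover Ccov.
have [K0 HK0] := IPR_N_bounded 'I_r.+1 ipr; pose K := K0.+1.
pose pattern t := [ffun n : 'I_K.+1 => col (n%:R * t)].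
have delta'0 : 0 < delta / K%:R by rewrite divr_gt0 ?ltr0n.
have [p [y Sy Ny]] := IPR_near0_fin_coloring pattern iprN delta'0.
have [n0 Nn0] := rfN 0%N; have [[St0 pt0] t0_bnd] := Ny 0%N n0 Nn0.
set t0 := \sum_(j < n0) _ in St0 pt0 t0_bnd.
have [i mono] := HK0 (fun n => col (n%:R * t0)).
have [i' [m /andP[m0 mK] [fm [x xP Mx]]]] :=
  mono_image_attained (ltn0Sn K0) (mono_image_widen (leqnSn K0) mono).
have col_pattern t : pattern t = pattern t0 -> col (m%:R * t) = i'.
  move=> /(congr1 (fun g : {ffun 'I_K.+1 -> 'I_r.+1} => g (Ordinal (mK : m < K.+1)%N))).
  by rewrite !ffunE /= fm.
exists i' => //; exists (block_vec (fun j => (x j)%:R * t0) (fun j => m%:R * y j)); split.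
  by move=> j; rewrite /block_vec; case: insub => [j'|]; apply: S_natmul.
move=> k; have [ku|/subnKC <-] := ltnP k u.
  apply: (@entry_in_block_top _ _ _ _ _ _ _ (Ordinal ku)).
  have [n nK [fn e]] := Mx (Ordinal ku).
  rewrite (ratr_sum_natmul _ e); split; last exact: natmul_lt_div nK t0_bnd.
  by rewrite -fn; apply/colP/S_natmul; case/andP: nK.
apply: entry_in_block_bottom; apply: entry_in_scale => n Nn.
have [[St pt] t_bnd] := Ny _ n Nn; split; last by apply: natmul_lt_div t_bnd; rewrite m0.
by rewrite -(col_pattern _ (etrans pt (esym pt0))); apply/colP/S_natmul.
Qed.
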